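(* Suppose $(\varepsilon,\beta,\gamma;(12))\in\mathrm{Par}(n)$. Let $b$ and $c$ be the orders of $\beta$ and $\gamma$ as elements of $\mathcal S_n$. Then $c\mid 2b$, and if $c$ is odd then $c=b$.
   Context: A Latin square of order $n$ is an $n\times n$ array with rows, columns and symbols indexed by $[n]$, each symbol occurring once in each row and each column, with triple set $O(L)=\{(i,j,L(i,j))\}$. Permutations act on the right; $\varepsilon$ is the identity. A paratopism $(\alpha,\beta,\gamma;(12))$ with $\alpha,\beta,\gamma\in\mathcal S_n$ maps $L$ to $L^\sigma$ with triple set $\{(y\beta,x\alpha,z\gamma):(x,y,z)\in O(L)\}$; it is an autoparatopism of $L$ if $L^\sigma=L$. $\mathrm{Par}(n)$ denotes the set of paratopisms that are autoparatopisms of at least one Latin square of order $n$. *)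

From mathcomp Require Import all_boot all_order all_fingroup.
Set Implicit Arguments. Unset Strict Implicit. Unset Printing Implicit Defensive.
Local Open Scope group_scope.

Definition latin_square (n : nat) (L : 'I_n -> 'I_n -> 'I_n) : Prop :=
  (forall i, injective (L i)) /\ (forall j, injective (fun i => L i j)).

Definition triples (n : nat) (L : 'I_n -> 'I_n -> 'I_n) : {set 'I_n * 'I_n * 'I_n} :=
  [set t | t.2 == L t.1.1 t.1.2].

(* Image of L under the paratopism (alpha, beta, gamma; (12)):
   triple set {(y beta, x alpha, z gamma) : (x,y,z) in O(L)}.
   Permutations act on the right: x alpha is written (alpha x) here. *)
Definition para12_image (n : nat) (a b c : {perm 'I_n}) (L : 'I_n -> 'I_n -> 'I_n)
  : {set 'I_n * 'I_n * 'I_n} :=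
  [set ((b t.1.2, a t.1.1), c t.2) | t in triples L].

Definition is_autoparatopism12 (n : nat) (a b c : {perm 'I_n})
  (L : 'I_n -> 'I_n -> 'I_n) : Prop :=
  para12_image a b c L = triples L.

Definition in_Par12 (n : nat) (a b c : {perm 'I_n}) : Prop :=
  exists L : 'I_n -> 'I_n -> 'I_n, latin_square L /\ is_autoparatopism12 a b c L.

From mathcomp Require Import all_boot all_order all_fingroup.
From mathcomp Require Import cyclic.
Set Implicit Arguments. Unset Strict Implicit. Unset Printing Implicit Defensive.

(* Being an autoparatopism with alpha = 1 means gamma (L x y) = L (beta y) x.
   Applying this twice gives gamma^2k (L x y) = L (beta^k x) (beta^k y), so
   gamma^(2b) fixes every entry, i.e. c | 2b.  If gamma^(2m+1) = 1, the same
   identity gives L (beta^(m+1) y) (beta^m x) = L x y, and cancelling in a row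
   yields beta^(2m+1) = 1; hence b | c, and c | 2b with c odd gives c | b. *)

Local Open Scope group_scope.

Lemma autoparatopism12_entry n (a b c : {perm 'I_n}) (L : 'I_n -> 'I_n -> 'I_n) :
  is_autoparatopism12 a b c L -> forall x y, c (L x y) = L (b y) (a x).
Proof.
move=> autL x y.
have : ((b y, a x), c (L x y)) \in para12_image a b c L.
  by apply/imsetP; exists ((x, y), L x y); rewrite ?inE.
by rewrite autL inE => /eqP.
Qed.

Section AutoparatopismOrders.

Variables (n : nat) (beta gamma : {perm 'I_n}) (L : 'I_n -> 'I_n -> 'I_n).
Hypothesis L_row_inj : forall x, injective (L x).
Hypothesis L_aut : forall x y, gamma (L x y) = L (beta y) x.

Lemma row_onto x z : exists y, L x y = z.
Proof.
by exists ((perm (@L_row_inj x))^-1 z); rewrite -[L x _](permE (@L_row_inj x)) permKV.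
Qed.

Lemma expg_double_entry k x y :
  (gamma ^+ (2 * k)) (L x y) = L ((beta ^+ k) x) ((beta ^+ k) y).
Proof.
elim: k x y => [|k IHk] x y; first by rewrite !expg0 !perm1.
by rewrite mulnS addSn add1n !expgSr !permM IHk !L_aut.
Qed.

Lemma order_dvdn_double : (#[gamma] %| 2 * #[beta])%N.
Proof.
rewrite order_dvdn; apply/eqP/permP => z.
have [y <-] := row_onto z z.
by rewrite expg_double_entry expg_order !perm1.
Qed.

Lemma expg_odd_trivial m :
  gamma ^+ (2 * m).+1 = 1 -> beta ^+ (2 * m).+1 = 1.
Proof.
move=> gamma_odd; apply/permP => x; rewrite perm1.
set y := (beta ^+ m.+1)^-1 x.
have entry_fixed : L x ((beta ^+ m) x) = L x y.
  by rewrite -{1}(permKV (beta ^+ m.+1) x) -/y expgSr permM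
             -L_aut -expg_double_entry -permM -expgSr gamma_odd perm1.
have -> : (2 * m).+1 = (m + m.+1)%N by rewrite addnS mul2n addnn.
by rewrite expgD permM (L_row_inj entry_fixed) permKV.
Qed.

Lemma odd_order_eq : odd #[gamma] -> #[gamma] = #[beta].
Proof.
move=> odd_c; have [m c_eq] : exists m, #[gamma] = (2 * m).+1.
  by exists #[gamma]./2; rewrite -[LHS]odd_double_half odd_c -mul2n.
have b_dvd_c : (#[beta] %| #[gamma])%N.
  by rewrite order_dvdn c_eq expg_odd_trivial // -c_eq expg_order.
apply/eqP; rewrite eqn_dvd b_dvd_c andbT.
by rewrite -(@Gauss_dvdr _ 2) ?coprimen2 ?odd_c // order_dvdn_double.
Qed.

End AutoparatopismOrders.

Theorem theorem4p1 (n : nat) (beta gamma : {perm 'I_n}) :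
  in_Par12 1%g beta gamma ->
  (#[gamma]%g %| 2 * #[beta]%g)%N /\ (odd #[gamma]%g -> #[gamma]%g = #[beta]%g).
Proof.
case=> L [[L_row_inj _] autL].
have L_aut x y : gamma (L x y) = L (beta y) x.
  by rewrite (autoparatopism12_entry autL) perm1.
split; [exact: order_dvdn_double L_aut | exact: odd_order_eq L_aut].
Qed.
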